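(* Let $X$ be a smooth projective curve of genus $g\ge 1$ over $\mathbb{F}_q$. Then, as $n\to\infty$, $$\widehat v_n = O\big(q^{(g-1)n(n+1)/2}\big),$$ where the implied constant depends only on $X/\mathbb{F}_q$.
   Context: The Artin zeta function of $X$ is $Z_X(t)=\sum_{D\ge 0} t^{\deg D}$, the sum being over effective divisors, with $t=q^{-s}$. It is a rational function $Z_X(t)=\frac{P_X(t)}{(1-t)(1-qt)}$, where $P_X$ is a polynomial of degree $2g$ with $P_X(0)=1$. Put $\zeta_X(s)=Z_X(q^{-s})$ and $\widehat\zeta_X(s):=q^{(g-1)s}\zeta_X(s)$. Define $\widehat\zeta_X^*(1):=\lim_{s\to 1}(1-q^{1-s})\widehat\zeta_X(s)=\frac{q^{g-1}P_X(q^{-1})}{1-q^{-1}}$ and, for $n\ge 1$, $\widehat v_n:=\widehat\zeta_X^*(1)\,\widehat\zeta_X(2)\widehat\zeta_X(3)\cdots\widehat\zeta_X(n)$. *)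

From mathcomp Require Import all_boot all_order all_algebra all_field.
Set Implicit Arguments. Unset Strict Implicit. Unset Printing Implicit Defensive.
Import Order.TTheory GRing.Theory Num.Theory.
Local Open Scope ring_scope.

Definition prime_power (q : nat) : Prop :=
  exists p k : nat, [/\ prime p, (0 < k)%N & q = (p ^ k)%N].

(* The Weil properties of the numerator P_X of the zeta function of a smooth
   projective curve of genus g over F_q: integer coefficients, degree 2g,
   P(0) = 1, functional equation P(t) = q^g t^(2g) P(1/(qt)), and the
   Riemann hypothesis (all complex roots have absolute value q^(-1/2)). *)
Definition weil_zeta_poly (q g : nat) (P : {poly int}) : Prop :=
  [/\ size P = (2 * g).+1,
      P`_0 = 1,
      (forall i : nat, (i <= 2 * g)%N ->
          P`_(2 * g - i) * (q%:Z ^+ i) = (q%:Z ^+ g) * P`_i)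
    & (forall z : algC, root (map_poly (fun a : int => a%:~R) P) z ->
          `|z| ^+ 2 * q%:R = 1)].

Section Zeta.
Variables (R : realFieldType) (q g : nat) (P : {poly int}).

Definition PR : {poly R} := map_poly (fun a : int => a%:~R) P.

Definition Zt (t : R) : R := PR.[t] / ((1 - t) * (1 - q%:R * t)).

Definition zetaX (s : int) : R := Zt ((q%:R : R) ^ (- s)).

Definition zetahat (s : int) : R := (q%:R : R) ^ ((g%:Z - 1) * s) * zetaX s.

Definition zetahat_star1 : R :=
  (q%:R : R) ^ (g%:Z - 1) * PR.[(q%:R)^-1] / (1 - (q%:R)^-1).

Definition vhat (n : nat) : R :=
  zetahat_star1 * \prod_(2 <= k < n.+1) zetahat k%:Z.

End Zeta.

From mathcomp Require Import all_boot all_order all_algebra all_field.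
From mathcomp Require Import lra zify.
Set Implicit Arguments. Unset Strict Implicit. Unset Printing Implicit Defensive.
Import Order.TTheory GRing.Theory Num.Theory.
Local Open Scope ring_scope.

(* For integer k >= 2, \hat\zeta_X(k) = q^((g-1)k) Z_X(q^-k), so \hat v_n is
   \hat\zeta_X^*(1) q^((g-1)(2 + ... + n)) times the product of the Z_X(q^-k),
   and 2 + ... + n <= n(n+1)/2.  Since P_X(0) = 1, |Z_X(x)| <= 1 + D x for small
   x >= 0, with D depending only on q and the coefficients of P_X.  The
   perturbations D q^-k are summable and (prod (1 + b_k)) (1 - sum b_k) <= 1, so
   the product of the Z_X(q^-k) stays bounded. *)

Section ProductBounds.
Variable R : realDomainType.

Lemma prod1D_mul_subr_sum_le1 (I : Type) (r : seq I) (b : I -> R) :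
  (forall i, 0 <= b i) ->
  (\prod_(i <- r) (1 + b i)) * (1 - \sum_(i <- r) b i) <= 1.
Proof.
move=> b_ge0; elim: r => [|i r IH]; first by rewrite !big_nil subr0 mulr1.
rewrite !big_cons.
set p := \prod_(j <- r) _ in IH *; set s := \sum_(j <- r) _ in IH *.
have p_ge0 : 0 <= p by apply: prodr_ge0 => j _; rewrite addr_ge0 ?b_ge0.
have s_ge0 : 0 <= s by apply: sumr_ge0.
have bi_ge0 := b_ge0 i.
have step : (1 + b i) * (1 - (b i + s)) <= 1 - s by nra.
apply: le_trans IH; rewrite mulrAC [p * _]mulrC; exact: ler_wpM2r.
Qed.

Lemma prod1D_le2 (I : Type) (r : seq I) (b : I -> R) :
  (forall i, 0 <= b i) -> 2 * \sum_(i <- r) b i <= 1 ->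
  \prod_(i <- r) (1 + b i) <= 2.
Proof.
move=> b_ge0 small_sum; have := prod1D_mul_subr_sum_le1 r b_ge0.
have : 0 <= \prod_(i <- r) (1 + b i).
  by apply: prodr_ge0 => i _; rewrite addr_ge0 ?b_ge0.
nra.
Qed.

Lemma subr1_mul_sum_expr_le1 (t : R) (n : nat) :
  0 <= t -> (1 - t) * \sum_(i < n) t ^+ i <= 1.
Proof.
move=> t_ge0; rewrite -opprB mulNr -subrX1 opprB lerBlDr lerDl.
exact: exprn_ge0.
Qed.

Lemma prod_tail_le2 (a : nat -> R) (t D : R) (m n : nat) :
  0 <= t -> 2 * t <= 1 -> 0 <= D -> 2 * (D * t ^+ m) <= 1 ->
  (forall k, (m < k)%N -> `|a k| <= 1 + D * t ^+ k) ->
  \prod_(m.+1 <= k < n.+1) `|a k| <= 2.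
Proof.
move=> t_ge0 t_le_half D_ge0 Dtm_small a_le.
have b_ge0 k : 0 <= D * t ^+ k by rewrite mulr_ge0 ?exprn_ge0.
apply: (le_trans _ (prod1D_le2 (r := index_iota m.+1 n.+1) b_ge0 _)).
  rewrite big_seq_cond [leRHS]big_seq_cond; apply: ler_prod => k.
  by rewrite andbT mem_index_iota => /andP [/a_le ->]; rewrite normr_ge0.
rewrite -{1}[m.+1]add0n big_addn big_mkord.
under eq_bigr do rewrite exprD [t ^+ _ * _]mulrC mulrA.
rewrite -mulr_sumr exprS mulrCA -mulrA mulrCA.
set S := \sum_(i < _) _.
have S_ge0 : 0 <= S by apply: sumr_ge0 => i _; rewrite exprn_ge0.
have tS_le1 : t * S <= 1.
  apply: le_trans (subr1_mul_sum_expr_le1 (n.+1 - m.+1) t_ge0).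
  by apply: ler_wpM2r => //; lra.
have := b_ge0 m; nra.
Qed.

End ProductBounds.

Lemma norm_horner_subr_coef0_le (R : realDomainType) (p : {poly R}) (n : nat)
    (x : R) :
  (size p <= n)%N -> 0 <= x <= 1 ->
  `|p.[x] - p`_0| <= (\sum_(i < n) `|p`_i|) * x.
Proof.
case: n => [|n] size_p /andP [x_ge0 x_le1].
  move: size_p; rewrite leqn0 size_poly_eq0 => /eqP ->.
  by rewrite horner0 coef0 subr0 normr0 big_ord0 mul0r.
rewrite (horner_coef_wide _ size_p) big_ord_recl expr0 mulr1 addrC addKr.
rewrite big_ord_recl mulrDl ler_wpDl ?mulr_ge0 // mulr_suml.
apply: le_trans (ler_norm_sum _ _ _) _; apply: ler_sum => i _.
rewrite normrM ler_wpM2l // ger0_norm ?exprn_ge0 //= exprS.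
by rewrite -[leRHS]mulr1 ler_wpM2l // exprn_ile1.
Qed.

Definition coef_norm1 (p : {poly int}) : nat :=
  (\sum_(i < size p) absz (p`_i)%R)%N.

Section ZetaFactorBound.
Variables (R : realFieldType) (q : nat) (P : {poly int}).
Hypothesis P0 : P`_0 = 1.

Lemma norm_horner_PR_subr1_le (x : R) : 0 <= x <= 1 ->
  `|(PR R P).[x] - 1| <= (coef_norm1 P)%:R * x.
Proof.
have coef_PR i : (PR R P)`_i = (P`_i)%:~R by rewrite coef_map_id0.
have PR0 : (PR R P)`_0 = 1 by rewrite coef_PR P0.
move=> x01; rewrite -[X in `|_ - X|]PR0.
rewrite /coef_norm1 natr_sum.
under eq_bigr do rewrite natr_absz intr_norm -coef_PR.
apply: norm_horner_subr_coef0_le x01; rewrite /PR /map_poly.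
exact: size_poly.
Qed.

Lemma norm_Zt_le (x : R) : 0 <= x -> 2 * ((1 + q%:R) * x) <= 1 ->
  `|Zt q P x| <= 1 + (2 * (coef_norm1 P + 1 + q))%:R * x.
Proof.
move=> x_ge0 x_small; set A : R := (coef_norm1 P)%:R; set Q : R := q%:R.
have Q_ge0 : 0 <= Q by rewrite ler0n.
have A_ge0 : 0 <= A by rewrite ler0n.
have Qx_ge0 : 0 <= Q * x by rewrite mulr_ge0.
have P_le : `|(PR R P).[x]| <= 1 + A * x.
  have x_le1 : x <= 1 by rewrite -/Q in x_small; nra.
  have x01 : 0 <= x <= 1 by rewrite x_ge0 x_le1.
  have := norm_horner_PR_subr1_le x01.
  have := ler_normD ((PR R P).[x] - 1) 1; rewrite subrK normr1 -/A; lra.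
rewrite -/Q in x_small.
have den_ge : 1 - (1 + Q) * x <= (1 - x) * (1 - Q * x).
  by have := mulr_ge0 x_ge0 Qx_ge0; rewrite mulrBl mulrBr; lra.
have den_gt0 : 0 < (1 - x) * (1 - Q * x) by lra.
rewrite /Zt -/Q normrM normfV (gtr0_norm den_gt0) ler_pdivrMr //.
apply: le_trans P_le _.
rewrite natrM !natrD -/A -/Q.
set D := 2%:R * (A + 1 + Q).
have Dx_ge0 : 0 <= D * x by rewrite mulr_ge0 // /D; lra.
apply: le_trans (_ : (1 + D * x) * (1 - (1 + Q) * x) <= _).
  have : D * x * (2 * ((1 + Q) * x)) <= D * x by rewrite -[leRHS]mulr1 ler_wpM2l.
  by rewrite /D; nra.
by apply: ler_wpM2l; lra.
Qed.

End ZetaFactorBound.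

Lemma prime_power_gt1 (q : nat) : prime_power q -> (1 < q)%N.
Proof.
move=> [p [k [p_prime k_gt0 ->]]]; apply: leq_trans (prime_gt1 p_prime) _.
by rewrite -{1}(expn1 p) leq_pexp2l // prime_gt0.
Qed.

Lemma sum_from2_le_half (n : nat) :
  (\sum_(2 <= k < n.+1) k <= (n * n.+1)./2)%N.
Proof.
case: n => [|n]; first by rewrite big_geq.
rewrite mulnC -bin2 -bin2_sum (@big_cat_nat _ _ _ 2 0) //=.
exact: leq_addl.
Qed.

Section VhatFactorization.
Variables (R : realFieldType) (q g : nat) (P : {poly int}).
Hypothesis g_ge1 : (1 <= g)%N.

Lemma zetahat_nat (k : nat) :
  zetahat R q g P k%:Z = q%:R ^+ (g.-1 * k) * Zt q P (q%:R^-1 ^+ k).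
Proof.
rewrite /zetahat /zetaX -exprz_inv.
by have -> : g%:Z - 1 = g.-1%:Z by rewrite -subn1 subzn.
Qed.

Lemma vhatE (n : nat) :
  vhat R q g P n = zetahat_star1 R q g P
    * q%:R ^+ (g.-1 * \sum_(2 <= k < n.+1) k)
    * \prod_(2 <= k < n.+1) Zt q P (q%:R^-1 ^+ k).
Proof.
rewrite /vhat -mulrA; congr (_ * _).
under eq_bigr do rewrite zetahat_nat.
by rewrite big_split /= prodrXr big_distrr.
Qed.

End VhatFactorization.

Lemma prod_Zt_eventually_bounded (R : realFieldType) (q : nat) (P : {poly int}) :
  (1 < q)%N -> P`_0 = 1 ->
  exists C : R, 0 <= C /\ exists N : nat, forall n : nat, (N <= n)%N ->
    `|\prod_(2 <= k < n.+1) Zt q P (q%:R^-1 ^+ k)| <= C.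
Proof.
move=> q_gt1 P0; set Q : R := q%:R; set t := Q^-1.
have Q_ge2 : 2 <= Q by rewrite (ler_nat _ 2 q).
have t_ge0 : 0 <= t by rewrite invr_ge0; lra.
have t_le_half : 2 * t <= 1 by rewrite /t ler_pdivrMr; lra.
set D := (2 * (coef_norm1 P + 1 + q))%N; set m := (2 * D)%N.
have Dtm_small : 2 * (D%:R * t ^+ m) <= 1.
  have Qm_gt0 : 0 < Q ^+ m by rewrite exprn_gt0 //; lra.
  rewrite /t exprVn mulrA ler_pdivrMr // mul1r -natrM /Q -natrX ler_nat.
  exact/ltnW/ltn_expl.
have D_ge : 2 * (1 + Q) <= D%:R.
  by rewrite /D natrM !natrD -/Q; have := ler0n R (coef_norm1 P); lra.
have Zt_le k : (m < k)%N -> `|Zt q P (t ^+ k)| <= 1 + D%:R * t ^+ k.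
  move=> m_lt_k; apply: (norm_Zt_le P0); first exact: exprn_ge0.
  have tk_le : t ^+ k <= t ^+ m by apply: ler_wiXn2l (ltnW m_lt_k); lra.
  have : 2 * (1 + Q) * t ^+ k <= D%:R * t ^+ m.
    by apply: ler_pM; rewrite ?exprn_ge0 //; lra.
  by have := mulr_ge0 (ler0n R D) (exprn_ge0 m t_ge0); lra.
exists (2 * \prod_(2 <= k < m.+1) `|Zt q P (t ^+ k)|); split.
  by rewrite mulr_ge0 ?prodr_ge0.
exists m => n m_le_n.
rewrite normr_prod (big_cat_nat _ (n := m.+1)) /=; last 2 first.
- by rewrite /m /D; lia.
- by rewrite ltnS.
rewrite mulrC.
apply: ler_wpM2r; first exact: prodr_ge0.
exact: prod_tail_le2 t_ge0 t_le_half (ler0n _ _) Dtm_small Zt_le.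
Qed.

Theorem mainTheorem1 (R : realFieldType) (q g : nat) (P : {poly int})
    (hq : prime_power q) (hg : (1 <= g)%N) (hP : weil_zeta_poly q g P) :
  exists C : R, 0 < C /\
    exists N : nat, forall n : nat, (N <= n)%N ->
      `|vhat R q g P n| <= C * (q%:R : R) ^+ (g.-1 * (n * n.+1)./2)%N.
Proof.
have q_gt1 := prime_power_gt1 hq.
case: hP => _ P0 _ _.
have [C [C_ge0 [N prod_le]]] := prod_Zt_eventually_bounded R q_gt1 P0.
set z : R := `|zetahat_star1 R q g P|.
have z_ge0 : 0 <= z := normr_ge0 _.
exists (z * C + 1); split; first by have := mulr_ge0 z_ge0 C_ge0; lra.
exists N => n /prod_le prod_le_n.
have Q_ge1 : 1 <= q%:R :> R by rewrite ler1n ltnW.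
have exp_le : q%:R ^+ (g.-1 * \sum_(2 <= k < n.+1) k)
                <= q%:R ^+ (g.-1 * (n * n.+1)./2) :> R.
  by apply: (ler_weXn2l Q_ge1); rewrite leq_mul2l sum_from2_le_half orbT.
rewrite vhatE //.
set e := q%:R ^+ _ in exp_le *; set E := q%:R ^+ _ in exp_le *.
have e_ge0 : 0 <= e by rewrite exprn_ge0 //; lra.
rewrite normrM normrM -/z (ger0_norm e_ge0).
set p := `|_| in prod_le_n *.
have E_ge0 : 0 <= E by apply: le_trans exp_le.
have : z * (e * p) <= z * (E * C).
  by apply: (ler_wpM2l z_ge0); apply: ler_pM; rewrite ?normr_ge0.
rewrite -mulrA => /le_trans; apply.
by rewrite mulrDl mul1r [E * C]mulrC mulrA lerDl.
Qed.
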